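(* Let $n,m,k$ be even with $n=m+k$, let $h:\mathbb F_2^m\to\mathbb F_2$ and $g:\mathbb F_2^k\to\mathbb F_2$ be bent functions, let $H\subset\mathbb F_2^m$ be a linear subspace of codimension $1$, and $\overline H=\mathbb F_2^m\setminus H$. Let $E_1=\mathbb F_2^k\times H$ and $E_2=\{\mathbf 0_k\}\times\overline H$. Define $W:\mathbb F_2^k\times\mathbb F_2^m\to\mathbb Z$ by $W(\alpha,\beta)=(-1)^{g(\alpha)\oplus h(\beta)}2^{n/2}$ for $(\alpha,\beta)\in E_1$, $W(\alpha,\beta)=(-1)^{h(\beta)}2^{m/2+k}$ for $(\alpha,\beta)\in E_2$, and $W(\alpha,\beta)=0$ otherwise. Then $W$ is the Walsh spectrum of a Boolean function $f:\mathbb F_2^n\to\mathbb F_2$. Moreover, the functions $f_1:E_1\to\mathbb F_2$, $f_1(\alpha,\beta)=g(\alpha)\oplus h(\beta)$, and $f_2:E_2\to\mathbb F_2$, $f_2(\alpha,\beta)=h(\beta)$, are totally disjoint spectra functions.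
   Context: $W_f(\omega)=\sum_x(-1)^{f(x)\oplus\omega\cdot x}$; for even $m$, $h$ is bent if $|W_h(\omega)|=2^{m/2}$ for all $\omega$. Totally disjoint spectra functions: for disjoint $S^{[1]},S^{[2]}\subset\mathbb F_2^n$ and functions $f_i:S^{[i]}\to\mathbb F_2$, put $X_i(u)=\sum_{\omega\in S^{[i]}}(-1)^{f_i(\omega)\oplus u\cdot\omega}$; the pair is totally disjoint spectra if $X_1(u)X_2(u)=0$ and $|X_1(u)|+|X_2(u)|>0$ for all $u\in\mathbb F_2^n$. *)

From HB Require Import structures.
From mathcomp Require Import all_boot all_order all_algebra.
Set Implicit Arguments. Unset Strict Implicit. Unset Printing Implicit Defensive.
Import Order.TTheory GRing.Theory Num.Theory.
Local Open Scope ring_scope.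

Definition sgn2 (a : 'F_2) : int := (-1) ^+ (a : nat).

Definition dot2 (n : nat) (u x : 'rV['F_2]_n) : 'F_2 := (u *m x^T) 0 0.

Definition walsh (n : nat) (f : 'rV['F_2]_n -> 'F_2) (w : 'rV['F_2]_n) : int :=
  \sum_(x : 'rV['F_2]_n) sgn2 (f x + dot2 w x).

(* bent: |W_f(w)| = 2^(n/2) for all w (used for even n) *)
Definition bent (n : nat) (f : 'rV['F_2]_n -> 'F_2) : Prop :=
  forall w, `|walsh f w| = (2 ^ n./2)%:Z.

Definition partial_walsh (n : nat) (S : {set 'rV['F_2]_n})
  (f : 'rV['F_2]_n -> 'F_2) (u : 'rV['F_2]_n) : int :=
  \sum_(w in S) sgn2 (f w + dot2 u w).

Definition totally_disjoint_spectra (n : nat)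
  (S1 : {set 'rV['F_2]_n}) (f1 : 'rV['F_2]_n -> 'F_2)
  (S2 : {set 'rV['F_2]_n}) (f2 : 'rV['F_2]_n -> 'F_2) : Prop :=
  [disjoint S1 & S2] /\
  forall u, partial_walsh S1 f1 u * partial_walsh S2 f2 u = 0 /\
            0 < `|partial_walsh S1 f1 u| + `|partial_walsh S2 f2 u|.

(** Write [H = ker v] and let [X(z)], [Xbar(z)] be the parts of [W_h(z)] over
    [H] and over its complement.  Then [W_h(z) = X + Xbar] and
    [W_h(z + v) = X - Xbar] both have modulus [2^(m/2)], so [X Xbar = 0] and
    the other one has modulus [2^(m/2)].  At [u = (y, z)] the partial Walsh
    sums of [f1] and [f2] are [W_g(y) X(z)] and [Xbar(z)], so exactly one of
    them vanishes; hence the inverse transform of [W], which is their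
    combination with the weights [2^(n/2)] and [2^(m/2+k)], has modulus [2^n]
    everywhere and is [2^n] times the sign vector of some [f] with [W_f = W]. *)
From HB Require Import structures.
From mathcomp Require Import all_boot all_order all_algebra.
From mathcomp Require Import ring zify.
Set Implicit Arguments. Unset Strict Implicit. Unset Printing Implicit Defensive.
Import Order.TTheory GRing.Theory Num.Theory.
Local Open Scope ring_scope.

Lemma F2_case (a : 'F_2) : a = 0 \/ a = 1.
Proof. by case: a => [[|[|n]] Hn]; [left|right|by []]; apply/val_inj. Qed.

Lemma F2_eq1 (a : 'F_2) : a != 0 -> a = 1.
Proof. by case: (F2_case a) => ->. Qed.

Lemma sgn21 : sgn2 1 = -1.
Proof. by []. Qed.

Lemma sgn2D (a b : 'F_2) : sgn2 (a + b) = sgn2 a * sgn2 b.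
Proof. by case: (F2_case a) => ->; case: (F2_case b) => ->. Qed.

Lemma sgn2B (a b : 'F_2) : sgn2 (a - b) = sgn2 a * sgn2 b.
Proof. by case: (F2_case a) => ->; case: (F2_case b) => ->. Qed.

Lemma dot2C n (u x : 'rV['F_2]_n) : dot2 u x = dot2 x u.
Proof. by rewrite /dot2 -[u *m x^T]trmxK trmx_mul trmxK mxE. Qed.

Lemma dot2Dl n (u v x : 'rV['F_2]_n) : dot2 (u + v) x = dot2 u x + dot2 v x.
Proof. by rewrite /dot2 mulmxDl mxE. Qed.

Lemma dot2Bl n (u v x : 'rV['F_2]_n) : dot2 (u - v) x = dot2 u x - dot2 v x.
Proof. by rewrite /dot2 mulmxBl !mxE. Qed.

Lemma dot20l n (x : 'rV['F_2]_n) : dot2 0 x = 0.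
Proof. by rewrite /dot2 mul0mx mxE. Qed.

Lemma dot2_row_mx k m (a y : 'rV['F_2]_k) (b z : 'rV['F_2]_m) :
  dot2 (row_mx a b) (row_mx y z) = dot2 a y + dot2 b z.
Proof. by rewrite /dot2 tr_row_mx mul_row_col mxE. Qed.

Lemma dot2_mulmx m (c : 'cV['F_2]_m) (b : 'rV['F_2]_m) :
  (b *m c == 0) = (dot2 c^T b == 0).
Proof.
rewrite /dot2 -[c^T *m b^T]trmxK trmx_mul !trmxK mxE.
by apply/eqP/eqP => [->|b0]; [rewrite mxE | apply/matrixP => i j; rewrite !ord1 b0 mxE].
Qed.

Lemma sum_row_mx (T : finType) (V : nmodType) k m (F : 'rV[T]_(k + m) -> V) :
  \sum_w F w = \sum_a \sum_b F (row_mx a b).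
Proof.
rewrite pair_bigA (reindex (fun p : 'rV_k * 'rV_m => row_mx p.1 p.2)) //=.
exists (fun w => (lsubmx w, rsubmx w)) => [[a b] _|w _] /=.
  by rewrite row_mxKl row_mxKr.
by rewrite hsubmxK.
Qed.

Lemma imset2_row_mx (T : finType) k m (A : {set 'rV[T]_k}) (B : {set 'rV[T]_m}) :
  [set row_mx a b | a in A, b in B] = [set w | (lsubmx w \in A) && (rsubmx w \in B)].
Proof.
apply/setP => w; rewrite inE; apply/imset2P/andP => [[a b Aa Bb ->]|[Aw Bw]].
  by rewrite row_mxKl row_mxKr.
by exists (lsubmx w) (rsubmx w); rewrite ?hsubmxK.
Qed.

Lemma imset_row_mx (T : finType) k m (a : 'rV[T]_k) (B : {set 'rV[T]_m}) :
  [set row_mx a b | b in B] = [set w | (lsubmx w == a) && (rsubmx w \in B)].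
Proof.
apply/setP => w; rewrite inE; apply/imsetP/andP => [[b Bb ->]|[/eqP <- Bw]].
  by rewrite row_mxKl row_mxKr.
by exists (rsubmx w); rewrite ?hsubmxK.
Qed.

Lemma codim1_submx_ker (F : fieldType) m (H : 'M[F]_m) : (\rank H).+1 = m ->
  exists c : 'cV[F]_m, forall b : 'rV_m, (b <= H)%MS = (b *m c == 0).
Proof.
move=> rH; have rC : \rank (cokermx H) = 1%N by rewrite mxrank_coker; lia.
have /matrix0Pn[i [j Cij]] : cokermx H != 0 by rewrite -mxrank_eq0 rC.
pose c := col j (cokermx H).
have Hc : H *m c = 0 by rewrite /c colE mulmxA mulmx_coker mul0mx.
have rc : \rank c = 1%N.
  have c0 : c != 0 by apply/matrix0Pn; exists i, 0; rewrite mxE.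
  by have := rank_leq_col c; move: c0; rewrite -mxrank_eq0; lia.
have HK : (H <= kermx c)%MS by apply/sub_kermxP.
have /andP[_ KH] : (H == kermx c)%MS.
  by rewrite -(mxrank_leqif_eq HK).2 mxrank_ker rc; apply/eqP; lia.
exists c => b; apply/idP/eqP => [bH | /sub_kermxP bK]; last exact: submx_trans bK KH.
by apply/sub_kermxP; apply: submx_trans bH HK.
Qed.

Lemma sum_sgn2_dot2 n (v : 'rV['F_2]_n) :
  \sum_x sgn2 (dot2 v x) = if v == 0 then (2 ^ n)%:Z else 0.
Proof.
have [->|/matrix0Pn[i [j vij]]] := eqVneq v 0.
  under eq_bigr do rewrite dot20l.
  by rewrite sumr_const card_mx card_Fp // mul1n natz.
pose e : 'rV['F_2]_n := delta_mx 0 j.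
have ve : dot2 v e = 1.
  by rewrite /dot2 trmx_delta -colE mxE; apply: F2_eq1; rewrite (ord1 i) in vij.
(* translating by [e] flips every sign, so the sum is its own opposite *)
suff : \sum_x sgn2 (dot2 v x) = - \sum_x sgn2 (dot2 v x) by lia.
rewrite {1}(reindex_inj (addIr e)) -sumrN; apply: eq_bigr => x _.
by rewrite !(dot2C v) dot2Dl (dot2C e) ve sgn2D sgn21 mulrN1.
Qed.

Lemma sum_sgn2_dot2M n (w u : 'rV['F_2]_n) :
  \sum_x sgn2 (dot2 w x) * sgn2 (dot2 u x) = if w == u then (2 ^ n)%:Z else 0.
Proof.
under eq_bigr do rewrite -sgn2B -dot2Bl.
by rewrite sum_sgn2_dot2 subr_eq0.
Qed.

Lemma walsh_inversion n (W : 'rV['F_2]_n -> int) :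
  (forall x, `|\sum_w W w * sgn2 (dot2 w x)| = (2 ^ n)%:Z) ->
  exists f : 'rV['F_2]_n -> 'F_2, forall u, walsh f u = W u.
Proof.
pose R x := \sum_w W w * sgn2 (dot2 w x).
move=> normR; exists (fun x => if R x < 0 then 1 else 0) => u.
have signR x : sgn2 (if R x < 0 then 1 else 0) * (2 ^ n)%:Z = R x.
  rewrite -(normR x) -/(R x); case: ltrP => Rx.
    by rewrite ltr0_norm // mulN1r opprK.
  by rewrite ger0_norm // mul1r.
apply: (mulIf (x := (2 ^ n)%:Z)); first by rewrite eqz_nat expn_eq0.
rewrite /walsh big_distrl /=.
transitivity (\sum_x R x * sgn2 (dot2 u x)).
  by apply: eq_bigr => x _; rewrite sgn2D -[in RHS]signR; ring.
transitivity (\sum_w W w * \sum_x sgn2 (dot2 w x) * sgn2 (dot2 u x)).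
  rewrite /R; under eq_bigr do rewrite big_distrl /=.
  rewrite exchange_big; apply: eq_bigr => w _; rewrite big_distrr /=.
  by apply: eq_bigr => x _; rewrite mulrA.
under eq_bigr do rewrite sum_sgn2_dot2M.
by rewrite (bigD1 u) //= eqxx big1 ?addr0 // => w /negbTE ->; rewrite mulr0.
Qed.

Lemma normDB_mul_eq0 (R : realDomainType) (a b : R) :
  `|a + b| = `|a - b| -> a * b = 0.
Proof.
move=> /(congr1 (fun x => x ^+ 2)); rewrite !real_normK ?num_real // => /eqP.
rewrite -subr_eq0 (_ : _ - _ = 4 * (a * b)); last by ring.
by rewrite mulf_eq0 pnatr_eq0 /= => /eqP.
Qed.

Lemma walsh_partial_walshC n (S : {set 'rV['F_2]_n}) f u :
  walsh f u = partial_walsh S f u + partial_walsh (~: S) f u.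
Proof. by rewrite /walsh (bigID (mem S)); congr (_ + _); apply: eq_bigl => b; rewrite ?inE. Qed.

Lemma bent_partial_walsh_hyperplane m (h : 'rV['F_2]_m -> 'F_2) (v : 'rV['F_2]_m) z :
  bent h ->
  let S := [set b | dot2 v b == 0] in
  (partial_walsh S h z = 0 /\ `|partial_walsh (~: S) h z| = (2 ^ m./2)%:Z) \/
  (partial_walsh (~: S) h z = 0 /\ `|partial_walsh S h z| = (2 ^ m./2)%:Z).
Proof.
move=> hbent S; set X := partial_walsh S h z; set Xc := partial_walsh (~: S) h z.
have walsh_z : walsh h z = X + Xc by apply: walsh_partial_walshC.
have walsh_zv : walsh h (z + v) = X - Xc.
  rewrite (walsh_partial_walshC S) /X /Xc /partial_walsh -sumrN.
  congr (_ + _); apply: eq_bigr => b.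
    by rewrite inE dot2Dl (dot2C v) => /eqP ->; rewrite addr0.
  by rewrite !inE dot2Dl (dot2C v) => /F2_eq1 ->; rewrite addrA [LHS]sgn2D sgn21 mulrN1.
have := hbent z; have := hbent (z + v); rewrite walsh_z walsh_zv => nB nD.
have /eqP := normDB_mul_eq0 (etrans nD (esym nB)); rewrite mulf_eq0.
by case/orP => /eqP X0; [left | right]; rewrite X0 ?add0r ?addr0 in nD.
Qed.

Lemma partial_walsh_row_mx k m (g : 'rV['F_2]_k -> 'F_2) (h : 'rV['F_2]_m -> 'F_2)
    (S : {set 'rV['F_2]_m}) y z :
  partial_walsh [set w | rsubmx w \in S] (fun w => g (lsubmx w) + h (rsubmx w)) (row_mx y z)
  = walsh g y * partial_walsh S h z.
Proof.
rewrite /partial_walsh big_mkcond sum_row_mx /walsh big_distrl; apply: eq_bigr => a _.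
rewrite big_distrr [RHS]big_mkcond; apply: eq_bigr => b _.
rewrite inE !row_mxKl !row_mxKr dot2_row_mx.
by case: ifP => // _; rewrite /= !sgn2D; ring.
Qed.

Lemma partial_walsh_row_mx0 k m (h : 'rV['F_2]_m -> 'F_2) (S : {set 'rV['F_2]_m}) y z :
  partial_walsh [set w | (lsubmx w == 0 :> 'rV_k) && (rsubmx w \in S)]
    (fun w => h (rsubmx w)) (row_mx y z) = partial_walsh S h z.
Proof.
rewrite /partial_walsh big_mkcond sum_row_mx (bigD1 0) //= [X in _ + X]big1 => [|a a0].
  rewrite addr0 [RHS]big_mkcond; apply: eq_bigr => b _.
  by rewrite inE row_mxKl row_mxKr eqxx dot2_row_mx (dot2C y) dot20l add0r.
by apply: big1 => b _; rewrite inE row_mxKl (negbTE a0).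
Qed.

Section GluedSpectra.

Variable n : nat.
Variables (S1 : {set 'rV['F_2]_n}) (f1 : 'rV['F_2]_n -> 'F_2) (c1 : int).
Variables (S2 : {set 'rV['F_2]_n}) (f2 : 'rV['F_2]_n -> 'F_2) (c2 : int).
Hypothesis S12 : [disjoint S1 & S2].

(* [c1 X1 + c2 X2] is the inverse transform of the glued spectrum, and
   [2^n] is the modulus that [walsh_inversion] requires of it. *)
Definition alternating_spectra : Prop :=
  forall u, (partial_walsh S1 f1 u = 0 /\ `|c2 * partial_walsh S2 f2 u| = (2 ^ n)%:Z) \/
            (partial_walsh S2 f2 u = 0 /\ `|c1 * partial_walsh S1 f1 u| = (2 ^ n)%:Z).

Hypothesis alt : alternating_spectra.

Lemma alternating_totally_disjoint : totally_disjoint_spectra S1 f1 S2 f2.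
Proof.
split=> // u; have pos2n : 0 < (2 ^ n)%:Z by rewrite ltz_nat expn_gt0.
case: (alt u) => -[X0 nX]; rewrite X0 normr0 ?mul0r ?mulr0 ?add0r ?addr0;
  split=> //; rewrite normr_gt0; apply: contraTneq pos2n => X'0;
  by rewrite -nX X'0 mulr0.
Qed.

Lemma alternating_walsh_glued :
  exists f : 'rV['F_2]_n -> 'F_2, forall w,
    walsh f w = if w \in S1 then sgn2 (f1 w) * c1
                else if w \in S2 then sgn2 (f2 w) * c2 else 0.
Proof.
apply: walsh_inversion => x.
have -> : \sum_w (if w \in S1 then sgn2 (f1 w) * c1
                  else if w \in S2 then sgn2 (f2 w) * c2 else 0) * sgn2 (dot2 w x)
          = c1 * partial_walsh S1 f1 x + c2 * partial_walsh S2 f2 x.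
  rewrite /partial_walsh !big_distrr !(big_mkcond (fun w => w \in _)) -big_split.
  apply: eq_bigr => w _ /=; rewrite (dot2C w).
  case: ifP => [w1|_]; first by rewrite (disjointFr S12 w1) sgn2D; ring.
  by case: ifP => _; rewrite ?sgn2D; ring.
by case: (alt x) => [[-> n2] | [-> n1]]; rewrite ?mulr0 ?add0r ?addr0.
Qed.

End GluedSpectra.

Theorem mainTheorem4 (k m : nat) (Hk : ~~ odd k) (Hm : ~~ odd m)
  (h : 'rV['F_2]_m -> 'F_2) (g : 'rV['F_2]_k -> 'F_2)
  (hbent : bent h) (gbent : bent g)
  (H : 'M['F_2]_m) (Hcodim : ((\rank H).+1 = m)%N) :
  let W := fun (a : 'rV['F_2]_k) (b : 'rV['F_2]_m) =>
    if (b <= H)%MS then sgn2 (g a + h b) * (2 ^ (k + m)./2)%:Z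
    else if a == 0 then sgn2 (h b) * (2 ^ (m./2 + k))%:Z
    else 0 in
  let E1 := [set row_mx a b | a in [set: 'rV['F_2]_k], b in [set b : 'rV['F_2]_m | (b <= H)%MS]] in
  let E2 := [set row_mx (0 : 'rV['F_2]_k) b | b in [set b : 'rV['F_2]_m | ~~ (b <= H)%MS]] in
  let f1 := fun w : 'rV['F_2]_(k + m) => g (lsubmx w) + h (rsubmx w) in
  let f2 := fun w : 'rV['F_2]_(k + m) => h (rsubmx w) in
  (exists f : 'rV['F_2]_(k + m) -> 'F_2,
     forall a b, walsh f (row_mx a b) = W a b)
  /\ totally_disjoint_spectra E1 f1 E2 f2.
Proof.
move=> W E1 E2 f1 f2.
have [c Hc] := codim1_submx_ker Hcodim.
pose S := [set b : 'rV['F_2]_m | (b <= H)%MS].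
have S_ker : S = [set b | dot2 c^T b == 0] by apply/setP => b; rewrite !inE Hc dot2_mulmx.
have E1E : E1 = [set w | rsubmx w \in S].
  by rewrite /E1 imset2_row_mx; apply/setP => w; rewrite !inE.
have E2E : E2 = [set w | (lsubmx w == 0) && (rsubmx w \in ~: S)].
  by rewrite /E2 imset_row_mx; apply/setP => w; rewrite !inE.
have E12 : [disjoint E1 & E2].
  by rewrite E1E E2E disjoints_subset; apply/subsetP => w; rewrite !inE => ->; rewrite andbF.
have k2 : (k./2.*2 = k)%N by rewrite -[RHS]odd_double_half (negbTE Hk).
have m2 : (m./2.*2 = m)%N by rewrite -[RHS]odd_double_half (negbTE Hm).
have alt : alternating_spectra E1 f1 (2 ^ (k + m)./2)%:Z E2 f2 (2 ^ (m./2 + k))%:Z.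
  move=> u; rewrite -(hsubmxK u) E1E E2E partial_walsh_row_mx partial_walsh_row_mx0.
  have := bent_partial_walsh_hyperplane c^T (rsubmx u) hbent; rewrite /= -S_ker.
  case=> -[-> nX]; [left | right]; split; rewrite ?mulr0 //.
    by rewrite normrM nX -PoszM -expnD; congr (Posz (2 ^ _)); lia.
  by rewrite !normrM nX gbent -!PoszM -!expnD; congr (Posz (2 ^ _)); lia.
split; last exact: alternating_totally_disjoint.
have [f hf] := alternating_walsh_glued E12 alt; exists f => a b.
by rewrite hf E1E E2E !inE /f1 /f2 !row_mxKl !row_mxKr /W; case: (b <= H)%MS; rewrite ?andbT.
Qed.
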